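(* Let $q$ be a prime power, $r\geq1$, $\delta\geq2$ integers and $R=r+\delta-1$. Let $a_1,\dots,a_\ell\in\mathbb{F}_q^*$ be distinct and $h=\prod_{i=1}^{\ell}(T^R-a_i)$. Let $P\in\mathbb{F}_q[T]$ be monic irreducible of degree $m$ with $P\equiv1\pmod h$, let $\alpha\in\mathbb{F}_{q^m}$ be a root of $P$, and let $\bar\phi$ be the Drinfeld module over $\mathbb{F}_{q^m}$ with $\bar\phi_T=\alpha+\tau$. Let $s\geq0$ be an integer and let \[f=\sum_{k=0}^{s}g_k(\tau)\,\bar\phi_{T^R}^{\,k}\] be a nonzero element of $\mathbb{F}_{q^m}\{\tau\}$ with each $g_k\in\mathbb{F}_{q^m}\{\tau\}_{\leq r-1}$. If $s+1\leq\ell$, then the $\mathbb{F}_q$-linear map $x\mapsto f(x)$ (where $\tau^i$ acts as $x\mapsto x^{q^i}$) restricted to $\bar\phi[h]$ is not the zero map.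
   Context: $\mathbb{F}_{q^m}\{\tau\}$ is the twisted polynomial ring with $(a\tau^i)(b\tau^j)=ab^{q^i}\tau^{i+j}$; $\mathbb{F}_{q^m}\{\tau\}_{\leq n}$ denotes its elements $\sum_{i=0}^{n}a_i\tau^i$. A Drinfeld module $\bar\phi:\mathbb{F}_q[T]\to\mathbb{F}_{q^m}\{\tau\}$ is the $\mathbb{F}_q$-algebra homomorphism determined by $\bar\phi_T$; powers $\bar\phi_{T^R}^k$ are products in $\mathbb{F}_{q^m}\{\tau\}$. For $a\in\mathbb{F}_q[T]$, $\bar\phi[a]$ is the set of roots in $\overline{\mathbb{F}}_q$ of the $q$-linearized polynomial obtained from $\bar\phi_a$ by replacing $\tau^i$ with $x^{q^i}$. *)

From HB Require Import structures.
From mathcomp Require Import all_boot all_order all_algebra all_field.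
Set Implicit Arguments. Unset Strict Implicit. Unset Printing Implicit Defensive.
Import GRing.Theory.
Local Open Scope ring_scope.

(* Twisted polynomials  sum_i a_i tau^i  over a field L are represented by their
   coefficient vector, stored as an element of {poly L} (only the additive
   structure and the coefficients of {poly L} are used).  The multiplication is
   the twisted one: (a tau^i)(b tau^j) = a b^(q^i) tau^(i+j). *)
Section Twisted.
Variables (L : fieldType) (q : nat).

Definition tmul (f g : {poly L}) : {poly L} :=
  \poly_(k < (size f + size g).-1)
     \sum_(i < k.+1) f`_i * (g`_(k - i)) ^+ (q ^ i).

Definition tpow (f : {poly L}) (n : nat) : {poly L} := iter n (tmul f) 1.

Definition teval (f : {poly L}) (x : L) : L :=
  \sum_(i < size f) f`_i * x ^+ (q ^ i).
End Twisted.

(* The Drinfeld module phi : F[T] -> L{tau}, the F-algebra homomorphism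
   determined by phi_T = alpha + tau; F embeds into L via sigma. *)
Definition drinfeld (F : finFieldType) (L : fieldType) (sigma : {rmorphism F -> L})
  (alpha : L) (a : {poly F}) : {poly L} :=
  \sum_(j < size a) sigma a`_j *: tpow #|F| (alpha%:P + 'X) j.

From HB Require Import structures.
From mathcomp Require Import all_boot all_order all_algebra all_field.
Set Implicit Arguments. Unset Strict Implicit. Unset Printing Implicit Defensive.
Import GRing.Theory.
Local Open Scope ring_scope.

(* Since P(alpha) = 0 and h divides P - 1, no factor T^R - a_i of h vanishes at
   alpha.  The constant coefficient of phi_(T^R - a_i) is (T^R - a_i)(alpha), so
   the q-linearized polynomial of phi_(T^R - a_i) has derivative a nonzero
   constant: it is separable, with q^R distinct roots.  On each of them phi_T^R
   acts as multiplication by a_i, a scalar fixed by the Frobenius, so f acts as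
   G_i = sum_k a_i^k g_k, whose q-linearized polynomial has degree at most
   q^(r-1) < q^R; hence G_i cannot vanish on all of them unless G_i = 0.
   As s + 1 <= l and the a_i are distinct, a Vandermonde argument provides an
   i with G_i != 0, for otherwise every g_k, hence f, would be 0. *)

Lemma sum_ord_widen (V : nmodType) (G : nat -> V) n N : (n <= N)%N ->
  (forall j, (n <= j)%N -> G j = 0) -> \sum_(j < n) G j = \sum_(j < N) G j.
Proof.
move=> le_nN G0; rewrite -(subnKC le_nN) big_split_ord /=.
by rewrite [X in _ = _ + X]big1 ?addr0 // => j _; rewrite G0 ?leq_addr.
Qed.

Lemma sum_triangle (V : nmodType) (G : nat -> nat -> V) N :
  \sum_(k < N) \sum_(i < k.+1) G i (k - i)%N = \sum_(i < N) \sum_(j < N - i) G i j.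
Proof.
elim: N => [|N IH]; first by rewrite !big_ord0.
rewrite big_ord_recr /= IH [in RHS]big_ord_recr /= subSnn big_ord1.
rewrite [X in _ + X = _]big_ord_recr /= subnn addrA; congr (_ + _).
rewrite -big_split /=; apply: eq_bigr => i _.
by rewrite subSn ?(ltnW (ltn_ord i)) // big_ord_recr.
Qed.

Lemma coef_neq0_lt_size (R : nzSemiRingType) (p : {poly R}) i :
  p`_i != 0 -> (i < size p)%N.
Proof. by apply: contraR; rewrite -leqNgt => /(nth_default 0) ->. Qed.

Lemma vandermonde_eq0 (R : idomainType) n s (c : 'I_n -> R) (b : nat -> R) :
  injective c -> (s <= n)%N -> (forall i, \sum_(k < s) c i ^+ k * b k = 0) ->
  forall k, (k < s)%N -> b k = 0.
Proof.
move=> c_inj le_sn b_ker k lt_ks; pose Q := \poly_(k < s) b k.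
have -> : b k = Q`_k by rewrite coef_poly lt_ks.
suff -> : Q = 0 by rewrite coef0.
apply: (@roots_geq_poly_eq0 _ Q [seq c i | i <- enum 'I_n]).
- apply/allP => _ /mapP [i _ ->]; apply/rootP; rewrite horner_poly -[RHS](b_ker i).
  by apply: eq_bigr => j _; rewrite mulrC.
- by rewrite map_inj_uniq ?enum_uniq.
- by rewrite size_map size_enum_ord (leq_trans (size_poly _ _)).
Qed.

Lemma vandermonde_poly_eq0 (R : idomainType) n s (c : 'I_n -> R) (g : nat -> {poly R}) :
  injective c -> (s <= n)%N -> (forall i, \sum_(k < s) c i ^+ k *: g k = 0) ->
  forall k, (k < s)%N -> g k = 0.
Proof.
move=> c_inj le_sn g_ker k lt_ks; apply/polyP => j; rewrite coef0.
apply: (vandermonde_eq0 (b := fun k => (g k)`_j) c_inj le_sn _ lt_ks) => i.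
by rewrite -[RHS](coef0 _ j) -(g_ker i) coef_sum; apply: eq_bigr => k' _; rewrite coefZ.
Qed.

Lemma map_dvdp_sub1_notroot (F : fieldType) (L : comNzRingType) (sigma : {rmorphism F -> L})
    (P b : {poly F}) x :
  root (map_poly sigma P) x -> b %| P - 1 -> ~~ root (map_poly sigma b) x.
Proof.
move=> /rootP Px /dvdpP [u /(congr1 (fun p => (map_poly sigma p).[x]))].
rewrite rmorphB rmorph1 rmorphM /= hornerD hornerN hornerC Px sub0r hornerM => eq_m1.
by apply/negP => /rootP bx; move/eqP: eq_m1; rewrite bx mulr0 oppr_eq0 oner_eq0.
Qed.

Lemma exists_root_notroot (L : closedFieldType) (A B : {poly L}) :
  separable_poly A -> B != 0 -> (size B < size A)%N ->
  exists2 z, root A z & ~~ root B z.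
Proof.
move=> sepA B_neq0 lt_BA; have [rs defA] := closed_field_poly_normal A.
have lcA_neq0 : lead_coef A != 0.
  by rewrite lead_coef_eq0 -size_poly_gt0 (leq_ltn_trans _ lt_BA).
have uniq_rs : uniq rs.
  by move: sepA; rewrite defA (eqp_separable (eqp_scale _ lcA_neq0)) separable_prod_XsubC.
have size_A : size A = (size rs).+1 by rewrite defA size_scale // size_prod_XsubC.
have [allB|/allPn [z rs_z Bz]] := boolP (all (root B) rs).
  by have := max_poly_roots B_neq0 allB uniq_rs; rewrite ltnNge -ltnS -size_A lt_BA.
by exists z; rewrite // defA rootZ // root_prod_XsubC.
Qed.

Section TwistedPolynomials.
Variables (L : fieldType) (q : nat).
Hypotheses (q_gt1 : (1 < q)%N) (q_pchar : [pchar L].-nat q).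
Implicit Types (f g e : {poly L}) (c x y : L).

Lemma pchar_nat_expq i : [pchar L].-nat (q ^ i)%N.
Proof. by rewrite pnatX q_pchar. Qed.

Lemma natr_q : q%:R = 0 :> L.
Proof.
have pq : pdiv q \in [pchar L] by apply: pnatPpi q_pchar _; rewrite pi_pdiv.
by apply/eqP; rewrite -(dvdn_pcharf pq) pdiv_dvd.
Qed.

Lemma exprDq i x y : (x + y) ^+ (q ^ i) = x ^+ (q ^ i) + y ^+ (q ^ i).
Proof. exact: exprDn_pchar (pchar_nat_expq i). Qed.

Lemma expr0q i : 0 ^+ (q ^ i) = 0 :> L.
Proof. by rewrite expr0n expn_eq0 (gtn_eqF (ltnW q_gt1)). Qed.

Lemma exprq_sum i n (G : 'I_n -> L) :
  (\sum_(j < n) G j) ^+ (q ^ i) = \sum_(j < n) G j ^+ (q ^ i).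
Proof. by elim/big_rec2: _ => [|j y1 y2 _ <-]; rewrite ?expr0q ?exprDq. Qed.

Lemma exprq_fixed i c : c ^+ q = c -> c ^+ (q ^ i) = c.
Proof. by move=> cq; elim: i => [|i IH]; rewrite ?expr1 // expnSr exprM IH cq. Qed.

Lemma teval_widen f x N : (size f <= N)%N ->
  teval q f x = \sum_(i < N) f`_i * x ^+ (q ^ i).
Proof.
move=> le_fN; apply: (sum_ord_widen (G := fun i => f`_i * x ^+ (q ^ i))) => // j le_fj.
by rewrite nth_default ?mul0r // (leq_trans le_fN).
Qed.

Lemma teval0 x : teval q 0 x = 0.
Proof. by rewrite /teval size_poly0 big_ord0. Qed.

Lemma tevalD f g x : teval q (f + g) x = teval q f x + teval q g x.
Proof.
set N := maxn (size f) (size g).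
rewrite !(@teval_widen _ _ N) ?leq_maxl ?leq_maxr ?(leq_trans (size_polyD _ _)) //.
by rewrite -big_split; apply: eq_bigr => i _; rewrite coefD mulrDl.
Qed.

Lemma tevalZ c f x : teval q (c *: f) x = c * teval q f x.
Proof.
rewrite !(@teval_widen _ _ (size f)) ?size_scale_leq // mulr_sumr.
by apply: eq_bigr => i _; rewrite coefZ mulrA.
Qed.

Lemma teval_sum n (G : 'I_n -> {poly L}) x :
  teval q (\sum_(k < n) G k) x = \sum_(k < n) teval q (G k) x.
Proof. exact: (big_morph (teval q ^~ x) (fun f g => tevalD f g x) (teval0 x)). Qed.

Lemma teval_xD f x y : teval q f (x + y) = teval q f x + teval q f y.
Proof. by rewrite /teval -big_split; apply: eq_bigr => i _; rewrite exprDq mulrDr. Qed.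

Lemma teval_xM f c x : c ^+ q = c -> teval q f (c * x) = c * teval q f x.
Proof.
move=> cq; rewrite /teval mulr_sumr; apply: eq_bigr => i _.
by rewrite exprMn (exprq_fixed _ cq) mulrCA.
Qed.

Lemma teval1 x : teval q 1 x = x.
Proof. by rewrite /teval size_poly1 big_ord1 coef1 mul1r expn0 expr1. Qed.

Lemma coef_tmul f g k :
  (tmul q f g)`_k = \sum_(i < k.+1) f`_i * (g`_(k - i)) ^+ (q ^ i).
Proof.
rewrite /tmul coef_poly; case: ltnP => // le_fg_k; apply/esym/big1 => i _.
have [lt_if|le_fi] := ltnP i (size f); last by rewrite nth_default ?mul0r.
rewrite (@nth_default _ _ g) ?expr0q ?mulr0 //.
have le_ik : (i + size g <= k)%N.
  rewrite (leq_trans _ le_fg_k) // -(ltn_predK lt_if) addSn leq_add2r.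
  by rewrite -ltnS (ltn_predK lt_if).
by rewrite leq_subRL // (leq_trans (leq_addr _ _) le_ik).
Qed.

Lemma tmul0l g : tmul q 0 g = 0.
Proof.
apply/polyP => k; rewrite coef_poly coef0; case: ifP => // _.
by apply: big1 => i _; rewrite coef0 mul0r.
Qed.

Lemma exists_power_combination_neq0 n s (c : 'I_n -> L) e (g : nat -> {poly L}) :
  injective c -> (s <= n)%N -> \sum_(k < s) tmul q (g k) (tpow q e k) != 0 ->
  exists i, \sum_(k < s) c i ^+ k *: g k != 0.
Proof.
move=> c_inj le_sn sum_neq0; apply/existsP; apply: contraR sum_neq0 => /existsPn G0.
apply/eqP/big1 => k _; rewrite (vandermonde_poly_eq0 c_inj le_sn) ?tmul0l // => i.
by apply/eqP; rewrite -[_ == 0]negbK G0.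
Qed.

Lemma teval_tmul f g x : teval q (tmul q f g) x = teval q f (teval q g x).
Proof.
set N := (size f + size g)%N.
pose G i j := f`_i * (g`_j) ^+ (q ^ i) * x ^+ (q ^ (i + j)).
have vanish_f i j : (size f <= i)%N -> G i j = 0 by move=> ?; rewrite /G nth_default ?mul0r.
have -> : teval q (tmul q f g) x = \sum_(k < N) \sum_(i < k.+1) G i (k - i)%N.
  rewrite (@teval_widen _ _ N); last exact: leq_trans (size_poly _ _) (leq_pred _).
  apply: eq_bigr => k _; rewrite coef_tmul mulr_suml; apply: eq_bigr => i _.
  by rewrite /G subnKC // -ltnS.
rewrite sum_triangle /teval.
rewrite -(@sum_ord_widen _ (fun i => \sum_(j < N - i) G i j) (size f)) ?leq_addr //;
  last by move=> i le_fi; rewrite big1 // => j _; rewrite vanish_f.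
apply: eq_bigr => i _; rewrite exprq_sum mulr_sumr /=.
rewrite -(@sum_ord_widen _ (G i) (size g)); first last.
- by move=> j le_gj; rewrite /G (nth_default _ le_gj) expr0q mulr0 mul0r.
- have le_if := ltnW (ltn_ord i).
  by rewrite leq_subRL ?leq_add2r // (leq_trans le_if) ?leq_addr.
by apply: eq_bigr => j _; rewrite /G exprMn -exprM -expnD addnC mulrA.
Qed.

Lemma teval_tpow f n x : teval q (tpow q f n) x = iter n (teval q f) x.
Proof. by elim: n => [|n IH]; rewrite ?teval1 // /tpow iterS teval_tmul -/(tpow q f n) IH. Qed.

Lemma teval_tpow_eigen e c z n : c ^+ q = c -> teval q e z = c * z ->
  teval q (tpow q e n) z = c ^+ n * z.
Proof.
move=> cq ez; rewrite teval_tpow; elim: n => [|n IH]; first by rewrite mul1r.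
rewrite iterS IH teval_xM; last by rewrite exprAC cq.
by rewrite ez mulrA -exprSr.
Qed.

Lemma teval_eigen_sum e c z s (g : nat -> {poly L}) : c ^+ q = c ->
  teval q e z = c * z ->
  teval q (\sum_(k < s) tmul q (g k) (tpow q e k)) z
  = teval q (\sum_(k < s) c ^+ k *: g k) z.
Proof.
move=> cq ez; rewrite !teval_sum; apply: eq_bigr => k _.
by rewrite teval_tmul (teval_tpow_eigen _ cq ez) teval_xM ?tevalZ // exprAC cq.
Qed.

Definition linearized f : {poly L} := \sum_(i < size f) f`_i *: 'X^(q ^ i).

Lemma horner_linearized f x : (linearized f).[x] = teval q f x.
Proof.
by rewrite horner_sum; apply: eq_bigr => i _; rewrite hornerZ hornerXn.
Qed.

Lemma coef_linearized f i : (i < size f)%N -> (linearized f)`_(q ^ i) = f`_i.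
Proof.
move=> lt_if; rewrite coef_sum (bigD1 (Ordinal lt_if)) //= coefZ coefXn eqxx mulr1.
rewrite big1 ?addr0 // => j ne_ji; rewrite coefZ coefXn eqn_exp2l //.
by move: ne_ji; rewrite -val_eqE eq_sym => /negbTE ->; rewrite mulr0.
Qed.

Lemma size_linearized f : f != 0 -> size (linearized f) = (q ^ (size f).-1).+1.
Proof.
move=> f_neq0; have lt_top : ((size f).-1 < size f)%N by rewrite ltn_predL size_poly_gt0.
apply/anti_leq/andP; split.
  apply/leq_sizeP => k lt_k; rewrite coef_sum big1 // => i _.
  rewrite coefZ coefXn; case: eqP => [k_eq|]; last by rewrite mulr0.
  by move: lt_k; rewrite k_eq ltn_exp2l // ltnNge -ltnS (ltn_predK lt_top) ltn_ord.
apply: coef_neq0_lt_size.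
by rewrite coef_linearized // -lead_coefE lead_coef_eq0.
Qed.

Lemma deriv_linearized f : (linearized f)^`() = (f`_0)%:P.
Proof.
rewrite /linearized raddf_sum /=.
case sz_f: (size f) => [|n]; first by rewrite big_ord0 nth_default ?sz_f.
rewrite big_ord_recl big1 ?addr0 => [|i _].
  by rewrite derivZ expn0 derivX alg_polyC.
by rewrite derivZ derivXn -mulr_natr -polyC_natr natrX natr_q expr0n /= ?polyC0 mulr0 scaler0.
Qed.

Lemma separable_linearized f : f`_0 != 0 -> separable_poly (linearized f).
Proof.
by move=> f0; rewrite unlock deriv_linearized -alg_polyC coprimepZr ?coprimep1.
Qed.

End TwistedPolynomials.

Lemma pchar_nat_card (F : finFieldType) (L : fieldType) (sigma : {rmorphism F -> L}) :
  [pchar L].-nat #|F|.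
Proof.
have [p p_pr p_char] := finPcharP F.
by rewrite (card_pprimeChar p_char) pnatX pnatE // (rmorph_pchar sigma p_char).
Qed.

Section DrinfeldModule.
Variables (F : finFieldType) (L : fieldType) (sigma : {rmorphism F -> L}) (alpha : L).
Local Notation q := #|F|.
Local Notation phiT := (alpha%:P + 'X).
Local Notation phi := (drinfeld sigma alpha).
Local Notation Phi := (teval q phiT).
Implicit Types (p b : {poly F}) (f : {poly L}) (x y : L).

Let q_gt1 : (1 < q)%N := finNzRing_gt1 F.
Let q_pchar : [pchar L].-nat q := pchar_nat_card sigma.

Lemma sigma_expq c : sigma c ^+ q = sigma c.
Proof. by rewrite -rmorphXn expf_card. Qed.

Lemma coef_tmul_phiT f k :
  (tmul q phiT f)`_k = alpha * f`_k + (if k is k'.+1 then f`_k' ^+ q else 0).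
Proof.
rewrite (coef_tmul q_gt1); case: k => [|k].
  by rewrite big_ord1 coefD coefC coefX subn0 /= expn0 expr1 !addr0.
rewrite 2!big_ord_recl big1 => [|i _]; last by rewrite coefD coefC coefX addr0 mul0r.
by rewrite !coefD !coefC !coefX /= subn0 subSS subn0 expr1 !addr0 add0r mul1r /bump /= expn1.
Qed.

Lemma size_tpow_phiT j : (size (tpow q phiT j) <= j.+1)%N.
Proof.
elim: j => [|j IH]; first by rewrite size_poly1.
rewrite /tpow iterS -/(tpow q phiT j) (leq_trans (size_poly _ _)) //.
have -> : size phiT = 2%N by rewrite addrC size_XaddC.
by rewrite add2n ltnS.
Qed.

Lemma coef_tpow_phiT_top j : (tpow q phiT j)`_j = 1.
Proof.
elim: j => [|j IH]; first by rewrite coef1.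
rewrite /tpow iterS -/(tpow q phiT j) coef_tmul_phiT IH expr1n.
by rewrite nth_default ?mulr0 ?add0r // size_tpow_phiT.
Qed.

Lemma coef0_tpow_phiT j : (tpow q phiT j)`_0 = alpha ^+ j.
Proof.
elim: j => [|j IH]; first by rewrite coef1.
by rewrite /tpow iterS -/(tpow q phiT j) coef_tmul_phiT IH addr0 exprS.
Qed.

Lemma coef_drinfeld p k :
  (phi p)`_k = \sum_(j < size p) sigma p`_j * (tpow q phiT j)`_k.
Proof. by rewrite /drinfeld coef_sum; apply: eq_bigr => j _; rewrite coefZ. Qed.

Lemma coef0_drinfeld p : (phi p)`_0 = (map_poly sigma p).[alpha].
Proof.
rewrite coef_drinfeld horner_coef size_map_poly.
by apply: eq_bigr => j _; rewrite coef_map coef0_tpow_phiT.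
Qed.

Lemma size_drinfeld p : size (phi p) = size p.
Proof.
have [->|p_neq0] := eqVneq p 0; first by rewrite /drinfeld size_poly0 big_ord0 size_poly0.
have vanish j k : (j < k)%N -> (tpow q phiT j)`_k = 0.
  by move=> lt_jk; rewrite nth_default // (leq_trans (size_tpow_phiT j)).
apply/anti_leq/andP; split.
  apply/leq_sizeP => k le_pk; rewrite coef_drinfeld big1 // => j _.
  by rewrite vanish ?mulr0 // (leq_trans _ le_pk).
have [n sz_p] : exists n, size p = n.+1.
  by exists (size p).-1; rewrite prednK // size_poly_gt0.
rewrite sz_p; apply: coef_neq0_lt_size.
rewrite coef_drinfeld sz_p big_ord_recr /= big1 => [|j _].
  have -> : p`_n = lead_coef p by rewrite lead_coefE sz_p.
  by rewrite coef_tpow_phiT_top mulr1 add0r fmorph_eq0 lead_coef_eq0.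
by rewrite vanish ?mulr0.
Qed.

(* phi_p(x) as sum_j sigma(p_j) phi_T^j(x): in this form phi_(p b) = phi_p o phi_b
   follows by induction on b. *)
Definition drinfeld_act p x := \sum_(j < size p) sigma p`_j * iter j Phi x.

Lemma teval_drinfeld p x : teval q (phi p) x = drinfeld_act p x.
Proof.
rewrite /drinfeld teval_sum; apply: eq_bigr => j _.
by rewrite tevalZ (teval_tpow q_gt1 q_pchar).
Qed.

Lemma iter_Phi_xD j x y : iter j Phi (x + y) = iter j Phi x + iter j Phi y.
Proof. by rewrite -!(teval_tpow q_gt1 q_pchar) teval_xD. Qed.

Lemma iter_Phi_xM j c x : iter j Phi (sigma c * x) = sigma c * iter j Phi x.
Proof. by rewrite -!(teval_tpow q_gt1 q_pchar) teval_xM ?sigma_expq. Qed.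

Lemma drinfeld_act_widen p x N : (size p <= N)%N ->
  drinfeld_act p x = \sum_(j < N) sigma p`_j * iter j Phi x.
Proof.
move=> le_pN; apply: (sum_ord_widen (G := fun j => sigma p`_j * iter j Phi x)) => // j le_pj.
by rewrite nth_default ?rmorph0 ?mul0r // (leq_trans le_pN).
Qed.

Lemma drinfeld_act0 x : drinfeld_act 0 x = 0.
Proof. by rewrite /drinfeld_act size_poly0 big_ord0. Qed.

Lemma drinfeld_actD p b x : drinfeld_act (p + b) x = drinfeld_act p x + drinfeld_act b x.
Proof.
set N := maxn (size p) (size b).
rewrite !(@drinfeld_act_widen _ _ N) ?leq_maxl ?leq_maxr ?(leq_trans (size_polyD _ _)) //.
by rewrite -big_split; apply: eq_bigr => i _; rewrite coefD rmorphD mulrDl.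
Qed.

Lemma drinfeld_actC c x : drinfeld_act c%:P x = sigma c * x.
Proof. by rewrite (@drinfeld_act_widen _ _ 1) ?size_polyC ?leq_b1 // big_ord1 coefC. Qed.

Lemma drinfeld_actZ c p x : drinfeld_act (c *: p) x = sigma c * drinfeld_act p x.
Proof.
rewrite !(@drinfeld_act_widen _ _ (size p)) ?size_scale_leq // mulr_sumr.
by apply: eq_bigr => i _; rewrite coefZ rmorphM mulrA.
Qed.

Lemma drinfeld_act_mulX p x : drinfeld_act (p * 'X) x = drinfeld_act p (Phi x).
Proof.
have le_pX : (size (p * 'X)%R <= (size p).+1)%N.
  by have [->|/size_mulX ->] := eqVneq p 0; rewrite ?mul0r ?size_poly0.
rewrite (drinfeld_act_widen _ le_pX) big_ord_recl coefMX /= rmorph0 mul0r add0r.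
by apply: eq_bigr => j _; rewrite coefMX /= -iterSr.
Qed.

Lemma drinfeld_act_xD p x y :
  drinfeld_act p (x + y) = drinfeld_act p x + drinfeld_act p y.
Proof.
by rewrite /drinfeld_act -big_split; apply: eq_bigr => j _; rewrite iter_Phi_xD mulrDr.
Qed.

Lemma drinfeld_act_xM p c x : drinfeld_act p (sigma c * x) = sigma c * drinfeld_act p x.
Proof.
by rewrite /drinfeld_act mulr_sumr; apply: eq_bigr => j _; rewrite iter_Phi_xM mulrCA.
Qed.

Lemma drinfeld_act_x0 p : drinfeld_act p 0 = 0.
Proof. by have := drinfeld_act_xM p 0 0; rewrite rmorph0 !mul0r. Qed.

Lemma drinfeld_actM p b x : drinfeld_act (p * b) x = drinfeld_act p (drinfeld_act b x).
Proof.
elim/poly_ind: b x => [|b c IH] x; first by rewrite mulr0 !drinfeld_act0 drinfeld_act_x0.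
rewrite mulrDr mulrA drinfeld_actD drinfeld_act_mulX IH mulrC mul_polyC drinfeld_actZ.
by rewrite drinfeld_actD drinfeld_act_mulX drinfeld_actC drinfeld_act_xD drinfeld_act_xM.
Qed.

Lemma teval_drinfeld_dvd p b x :
  p %| b -> teval q (phi p) x = 0 -> teval q (phi b) x = 0.
Proof.
rewrite !teval_drinfeld => /dvdpP [u ->] px0.
by rewrite drinfeld_actM px0 drinfeld_act_x0.
Qed.

Lemma teval_drinfeld_eigen p c x :
  teval q (phi (p - c%:P)) x = 0 -> teval q (phi p) x = sigma c * x.
Proof.
move=> px; rewrite teval_drinfeld -(subrK c%:P p) drinfeld_actD drinfeld_actC.
by rewrite -teval_drinfeld px add0r.
Qed.

End DrinfeldModule.

Lemma exists_drinfeld_kernel_notroot (F : finFieldType) (L : closedFieldType)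
    (sigma : {rmorphism F -> L}) (alpha : L) (p : {poly F}) (G : {poly L}) :
  ~~ root (map_poly sigma p) alpha -> G != 0 -> (size G < size p)%N ->
  exists2 z, teval #|F| (drinfeld sigma alpha p) z = 0 & teval #|F| G z != 0.
Proof.
move=> p_alpha G_neq0 lt_Gp.
have q_gt1 := finNzRing_gt1 F; have q_pchar := pchar_nat_card sigma.
have p_neq0 : p != 0 by rewrite -size_poly_gt0 (leq_ltn_trans _ lt_Gp).
set phi_p := drinfeld sigma alpha p.
have phi_neq0 : phi_p != 0 by rewrite -size_poly_eq0 size_drinfeld size_poly_eq0.
have [|||z] := @exists_root_notroot _ (linearized #|F| phi_p) (linearized #|F| G).
- by apply: separable_linearized; rewrite // coef0_drinfeld.
- by rewrite -size_poly_eq0 size_linearized.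
- by rewrite !size_linearized // ltnS ltn_exp2l // size_drinfeld -ltnS !prednK ?size_poly_gt0.
by rewrite /root !horner_linearized // => /eqP kz Gz; exists z.
Qed.

Theorem lemma3p3
  (F : finFieldType) (L : closedFieldType) (sigma : {rmorphism F -> L})
  (r delta l m s : nat) (a : 'I_l -> F) (P : {poly F}) (alpha : L)
  (g : nat -> {poly L}) :
  (1 <= r)%N -> (2 <= delta)%N ->
  injective a -> (forall i, a i != 0) ->
  P \is monic -> irreducible_poly P -> size P = m.+1 ->
  (\prod_(i < l) ('X^(r + delta - 1) - (a i)%:P)) %| P - 1 ->
  root (map_poly sigma P) alpha ->
  (forall k, (k <= s)%N -> (size (g k) <= r)%N /\
     forall i, ((g k)`_i) ^+ (#|F| ^ m) = (g k)`_i) ->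
  \sum_(k < s.+1) tmul #|F| (g k)
       (tpow #|F| (drinfeld sigma alpha 'X^(r + delta - 1)) k) != 0 ->
  (s.+1 <= l)%N ->
  exists x : L,
    teval #|F| (drinfeld sigma alpha (\prod_(i < l) ('X^(r + delta - 1) - (a i)%:P))) x = 0
    /\ teval #|F| (\sum_(k < s.+1) tmul #|F| (g k)
       (tpow #|F| (drinfeld sigma alpha 'X^(r + delta - 1)) k)) x != 0.
Proof.
(* Only P(alpha) = 0 and h | P - 1 matter: together they force h(alpha) != 0. *)
move=> r_gt0 delta_ge2 a_inj _ _ _ _ h_dvd_P1 P_alpha g_small f_neq0 s_lt_l.
set R := (r + delta - 1)%N in h_dvd_P1 f_neq0 *.
have r_lt_R : (r < R)%N.
  by rewrite /R -addnBA ?(leq_trans _ delta_ge2) // -{1}[r]addn0 ltn_add2l subn_gt0.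
have sigma_a_inj : injective (sigma \o a) by move=> i j /fmorph_inj /a_inj.
have [i Gi_neq0] := exists_power_combination_neq0 sigma_a_inj s_lt_l f_neq0.
have h_factor : ('X^R - (a i)%:P) %| \prod_(j < l) ('X^R - (a j)%:P).
  by rewrite (bigD1 i) //= dvdp_mulIl.
have size_Gi : (size (\sum_(k < s.+1) sigma (a i) ^+ k *: g k)%R < size ('X^R - (a i)%:P)%R)%N.
  rewrite size_XnsubC ?(leq_trans r_gt0 (ltnW r_lt_R)) // ltnS (leq_trans _ (ltnW r_lt_R)) //.
  rewrite (leq_trans (size_sum _ _ _)) //; apply/bigmax_leqP => k _.
  by rewrite (leq_trans (size_scale_leq _ _)) // (g_small k (ltn_ord k)).1.
have [z kz Gz] := exists_drinfeld_kernel_notroot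
  (map_dvdp_sub1_notroot P_alpha (dvdp_trans h_factor h_dvd_P1)) Gi_neq0 size_Gi.
exists z; split; first exact: teval_drinfeld_dvd h_factor kz.
have eigen_z := teval_drinfeld_eigen kz.
have q_gt1 := finNzRing_gt1 F; have q_pchar := pchar_nat_card sigma.
by rewrite (teval_eigen_sum q_gt1 q_pchar _ _ (sigma_expq _ _) eigen_z).
Qed.
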